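(* Consider problem (RCL) as defined in the context, and suppose: (A1) for every $i\in\{1,\dots,m\}$, $\mathcal{D}_{\boldsymbol{X}_i}$ is absolutely continuous with respect to $\mathcal{D}_{\boldsymbol{X}_0}$, and $\mathcal{D}_{\boldsymbol{X}_0}$ is nonatomic; (A2) for each $i\in\{0,\dots,m\}$ and every $\boldsymbol f\in\mathcal F$, the function $(\boldsymbol x,y)\mapsto \ell_i(\boldsymbol f(\boldsymbol x),y)$ belongs to $\mathcal{Z}^i_2=\mathcal{L}_{p'}(\mathcal{D}_i,\mathbb{R})$, and $\mathcal F$ is decomposable. Then for each $i\in\{1,\dots,m\}$ there exist a convex, proper, lower-semicontinuous and positively homogeneous risk measure $\widetilde{\rho}_i:\mathcal{L}_1(\mathcal{D}_{\boldsymbol{X}_0},\mathbb{R})\to\mathbb{R}$ and a function $G_i:\mathbb{R}^k\times\mathbb{R}^d\to\mathbb{R}$ with $G_i(\boldsymbol f(\cdot),\cdot)\in\mathcal{L}_1(\mathcal{D}_{\boldsymbol{X}_0},\mathbb{R})$ for all $\boldsymbol f\in\mathcal F$, such that for every $\boldsymbol f\in\mathcal F$, $$\rho_0\big(\widehat\rho_0(\ell_0(\boldsymbol f(\boldsymbol X_0),Y_0)\mid \boldsymbol X_0)\big)=\rho_0\big(F_0(\boldsymbol f(\boldsymbol X_0),\boldsymbol X_0)\big),$$ $$\rho_i\big(\widehat\rho_i(\ell_i(\boldsymbol f(\boldsymbol X_i),Y_i)\mid \boldsymbol X_i)\big)=\widetilde\rho_i\big(G_i(\boldsymbol f(\boldsymbol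 X_0),\boldsymbol X_0)\big),\quad i=1,\dots,m.$$ Consequently (RCL) is equivalent to the problem $$\min_{\boldsymbol f\in\mathcal F}\ \rho_0\big(F_0(\boldsymbol f(\boldsymbol X_0),\boldsymbol X_0)\big)\quad\text{s.t.}\quad \widetilde\rho_i\big(G_i(\boldsymbol f(\boldsymbol X_0),\boldsymbol X_0)\big)\le c_i,\ i=1,\dots,m,$$ in which all risk terms are evaluated on functions of the single random vector $\boldsymbol X_0$ with distribution $\mathcal D_{\boldsymbol X_0}$.
   Context: Let $(\Omega,\mathscr F,\mu)$ be a complete probability space. For $i\in\{0,1,\dots,m\}$, let $(\boldsymbol X_i,Y_i):\Omega\to\mathbb R^d\times\mathbb R$ be random pairs with Borel distributions $\mathcal D_i$ on $\mathbb R^d\times\mathbb R$; $\mathcal D_{\boldsymbol X_i}$ denotes the marginal of $\boldsymbol X_i$ and $\mathcal D_{Y_i|\boldsymbol X_i}$ the conditional distribution of $Y_i$ given $\boldsymbol X_i$. A measure $P$ is nonatomic if every event $E$ with $P(E)>0$ contains an event $E'$ with $P(E)>P(E')>0$. Conditional risk mappings: fix $p,p'\in[1,\infty]$ and set $\mathcal Z^i_1=\mathcal L_p(\Omega,\sigma(\boldsymbol X_i),\mu;\mathbb R)$, $\mathcal Z^i_2=\mathcal L_{p'}(\mathcal D_i,\mathbb R)$, $\mathcal Z^i_3=\mathcal L_{p'}(\mathcal D_{Y_i|\boldsymbol X_i},\mathbb R)$. A conditional risk mapping is a map $\widehat\rho(\cdot\mid\boldsymbol X_i):\mathcal Z^i_2\to\mathcal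 Z^i_1$ such that for every Borel $Z:\mathbb R^{d+1}\to\mathbb R$ in $\mathcal Z^i_2$ and every $\omega\in\Omega$, $\widehat\rho(Z(\boldsymbol X_i,Y_i)\mid\boldsymbol X_i)(\omega)=\widehat\rho(Z(\boldsymbol x,Y_i)\mid\boldsymbol X_i)(\omega)\big|_{\boldsymbol x=\boldsymbol X_i(\omega)}$ (substitution rule), where for fixed $\boldsymbol x$ the instantiation $\widehat\rho(Z(\boldsymbol x,\cdot)\mid\boldsymbol X_i)(\omega)$ is a real-valued risk functional on $\mathcal Z^i_3$. No convexity, monotonicity or homogeneity is required of $\widehat\rho$ (examples: conditional expectation, conditional CVaR, conditional mean-upper-semideviation). Problem (RCL): let $\ell_i:\mathbb R^k\times\mathbb R\to\mathbb R_+$ ($i=0,\dots,m$) be arbitrary (possibly nonconvex, discontinuous) loss functions, $c_i\in\mathbb R$, $\mathcal F$ a set of measurable functions $\boldsymbol f:\mathbb R^d\to\mathbb R^k$, $\widehat\rho_i(\cdot\mid\boldsymbol X_i)$ conditional risk mappings, and $\rho_i:\mathcal L_1(\mathcal D_{\boldsymbol X_i},\mathbb R)\to\mathbb R$ real-valued, convex, lower semicontinuous and positively homogeneous risk measures (equivalently, $\rho_i(Z)=\sup_{\zeta\in\mathbb A_i}\int\zeta Z\,d\mathcal D_{\boldsymbol X_i}$ for a bounded set $\mathbb A_i\subseteq\mathcal L_\infty(\mathcal D_{\boldsymbol X_i},\mathbb R)$). (RCL) is: minimize over $\boldsymbol f\in\mathcal F$ the quantity $\rho_0(\widehat\rho_0(\ell_0(\boldsymbol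 f(\boldsymbol X_0),Y_0)\mid\boldsymbol X_0))$ subject to $\rho_i(\widehat\rho_i(\ell_i(\boldsymbol f(\boldsymbol X_i),Y_i)\mid\boldsymbol X_i))\le c_i$ for $i=1,\dots,m$. $F_i$: for $\boldsymbol z\in\mathbb R^k$ and $\boldsymbol x\in\mathbb R^d$, $F_i(\boldsymbol z,\boldsymbol x)$ denotes the value of $\widehat\rho_i(\ell_i(\boldsymbol z,Y_i)\mid\boldsymbol X_i)$ at $\boldsymbol X_i=\boldsymbol x$, so that by the substitution rule $\widehat\rho_i(\ell_i(\boldsymbol f(\boldsymbol X_i),Y_i)\mid\boldsymbol X_i)=F_i(\boldsymbol f(\boldsymbol X_i),\boldsymbol X_i)$ and $F_i(\boldsymbol f(\cdot),\cdot)\in\mathcal L_p(\mathcal D_{\boldsymbol X_i},\mathbb R)$. A set $\mathcal F$ of measurable functions on $\mathbb R^d$ is decomposable if for all $\boldsymbol f,\boldsymbol g\in\mathcal F$ and every Borel set $E\subseteq\mathbb R^d$, the function $\boldsymbol f\mathbf 1_E+\boldsymbol g\mathbf 1_{E^c}$ belongs to $\mathcal F$. *)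

From HB Require Import structures.
From mathcomp Require Import all_boot all_order all_algebra.
From mathcomp Require Import all_classical all_reals all_analysis.
Import Order.TTheory GRing.Theory Num.Theory.
Import numFieldNormedType.Exports.
Set Implicit Arguments. Unset Strict Implicit. Unset Printing Implicit Defensive.
Local Open Scope classical_set_scope.
Local Open Scope ring_scope.

(* R^n with its Borel sigma-algebra (generated by the open sets of the
   usual (product/max-norm) topology on row vectors). *)
Definition Rvec (R : realType) (n : nat) :=
  g_sigma_algebraType (@open 'rV[R]_n).

Section joint.
Context d (Om : measurableType d) dT (T : measurableType dT) (R : realType).
Variables (X : {mfun Om >-> T}) (Y : {mfun Om >-> R}).
Definition pairRV : Om -> (T * R)%type := fun w => (X w, Y w).
Lemma pairRV_measurable : measurable_fun setT pairRV.
Proof. exact: measurable_fun_pair. Qed.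
HB.instance Definition _ := isMeasurableFun.Build _ _ _ _ pairRV pairRV_measurable.
End joint.

Section defs.
Context d (T : measurableType d) (R : realType).
Local Open Scope ereal_scope.

(* h belongs to L_p(mu) (as a function; elements of L_p are taken as
   representatives) *)
Definition inLp (mu : {measure set T -> \bar R}) (p : \bar R) (h : T -> R) :=
  measurable_fun setT h /\ 'N[mu]_p[EFin \o h] < +oo.

Definition nonatomic (P : {measure set T -> \bar R}) :=
  forall E, measurable E -> 0 < P E ->
    exists E', [/\ measurable E', E' `<=` E, 0 < P E' & P E' < P E].

Definition L1_ae_invariant (mu : {measure set T -> \bar R}) (rho : (T -> R) -> R) :=
  forall Z1 Z2, inLp mu 1 Z1 -> inLp mu 1 Z2 ->
    (\forall x \ae mu, Z1 x = Z2 x) -> rho Z1 = rho Z2.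

Definition L1_convex (mu : {measure set T -> \bar R}) (rho : (T -> R) -> R) :=
  forall Z1 Z2 (t : R), inLp mu 1 Z1 -> inLp mu 1 Z2 -> (0 <= t <= 1)%R ->
    (rho (fun x => t * Z1 x + (1 - t) * Z2 x)%R <= t * rho Z1 + (1 - t) * rho Z2)%R.

Definition L1_pos_homogeneous (mu : {measure set T -> \bar R}) (rho : (T -> R) -> R) :=
  forall Z (t : R), inLp mu 1 Z -> (0 < t)%R -> rho (fun x => t * Z x)%R = (t * rho Z)%R.

(* lower semicontinuity w.r.t. the L_1(mu) norm: sublevel sets are closed *)
Definition L1_lsc (mu : {measure set T -> \bar R}) (rho : (T -> R) -> R) :=
  forall (Zn : nat -> T -> R) Z (c : R),
    (forall n, inLp mu 1 (Zn n)) -> inLp mu 1 Z ->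
    (forall n, (rho (Zn n) <= c)%R) ->
    (fun n => 'N[mu]_1[EFin \o (fun x => Zn n x - Z x)%R]) @ \oo --> 0 ->
    (rho Z <= c)%R.

(* real-valued (hence proper), convex, l.s.c., positively homogeneous risk
   measure on L_1(mu) (well defined on a.e.-classes) *)
Definition coherent_L1_risk (mu : {measure set T -> \bar R}) (rho : (T -> R) -> R) :=
  [/\ L1_ae_invariant mu rho, L1_convex mu rho, L1_lsc mu rho
    & L1_pos_homogeneous mu rho].

Definition L1_dual_rep (mu : {measure set T -> \bar R}) (rho : (T -> R) -> R) :=
  exists A : set (T -> R),
    (exists C : R, forall zeta, A zeta ->
        measurable_fun setT zeta /\ \forall x \ae mu, (`|zeta x| <= C)%R) /\
    forall Z, inLp mu 1 Z ->
      (rho Z)%:E = ereal_sup [set \int[mu]_x (zeta x * Z x)%R%:E | zeta in A].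

Definition decomposable dU (U : measurableType dU) (F : set (T -> U)) :=
  forall f g, F f -> F g -> forall E : set T, measurable E ->
    F (fun x => if x \in E then f x else g x).

End defs.

From HB Require Import structures.
From mathcomp Require Import all_boot all_order all_algebra.
From mathcomp Require Import all_classical all_reals all_analysis.
From mathcomp Require Import measurable_realfun.
Import Order.TTheory GRing.Theory Num.Theory.
Import numFieldNormedType.Exports.
Set Implicit Arguments. Unset Strict Implicit. Unset Printing Implicit Defensive.
Local Open Scope classical_set_scope.
Local Open Scope ring_scope.

(* Let h be the Radon-Nikodym density of D_{X_i} with respect to D_{X_0}
   (it exists by (A1)).  Change of variables turns an L_1(D_{X_i}) function Z
   into the L_1(D_{X_0}) function Z h, so one takes G_i(z, x) = F_i(z, x) h(x)
   and rho~_i(Z) = rho_i(Z / h).  Since h > 0 D_{X_i}-a.e., Z |-> Z / h maps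
   L_1(D_{X_0}) contractively into L_1(D_{X_i}) (the junk value x / 0 = 0
   only occurs on a D_{X_i}-null set) and G_i / h = F_i a.e., so
   rho~_i inherits a.e.-invariance, convexity, lower semicontinuity and
   positive homogeneity from rho_i.  The substitution rule makes
   rhat_i(ell_i(f(X_i), Y_i) | X_i) = F_i(f(X_i), X_i) pointwise, hence every
   representative g of it agrees with F_i(f(.), .) *)

Definition rn_density d (T : measurableType d) (R : realType)
    (nu : {finite_measure set T -> \bar R})
    (mu : {sigma_finite_measure set T -> \bar R}) (x : T) : R :=
  fine (Radon_Nikodym_SigmaFinite.f nu mu x).
Arguments rn_density {d T R}.

Section measure_facts.
Context d (T : measurableType d) (R : realType).
Local Open Scope ereal_scope.

Lemma dominates_ae (nu mu : {measure set T -> \bar R}) (P : T -> Prop) :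
  nu `<< mu -> (\forall x \ae mu, P x) -> \forall x \ae nu, P x.
Proof.
move=> numu [A [mA muA0 PA]]; exists A; split => //.
by apply: (numu A) => //; exact/measure0_null_setP.
Qed.

Lemma inLp1_of_inLp (mu : {finite_measure set T -> \bar R}) p (f : T -> R) :
  1 <= p -> inLp mu p f -> inLp mu 1 f.
Proof.
move=> p1 [mf fp].
have : f \in Lfun mu p by rewrite inE; apply/andP; split; rewrite inE.
move/(Lfun_subset (lexx _) p1 (fin_num_measure _ _ measurableT) p1).
by rewrite inE => /andP[]; rewrite !inE.
Qed.

Lemma inLp1_ae_eq (mu : {measure set T -> \bar R}) (f g : T -> R) :
  inLp mu 1 g -> measurable_fun setT f -> (\forall x \ae mu, f x = g x) ->
  inLp mu 1 f.
Proof.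
move=> [mg g1] mf fg; split => //; move: g1; rewrite !Lnorm1.
rewrite (@ae_eq_integral _ _ _ mu setT
  (fun x => `|(g x)%:E|) (fun x => `|(f x)%:E|)) //.
- by apply/measurable_EFinP; exact: measurableT_comp.
- by apply/measurable_EFinP; exact: measurableT_comp.
- by apply: filterS fg => x /= ->.
Qed.

Lemma coherent_L1_risk_ae_eq (mu : {measure set T -> \bar R}) rho (f g : T -> R) :
  coherent_L1_risk mu rho -> inLp mu 1 g -> measurable_fun setT f ->
  (\forall x \ae mu, f x = g x) -> rho f = rho g.
Proof.
move=> [rho_ae _ _ _] g1 mf fg.
by apply: rho_ae => //; exact: inLp1_ae_eq g1 mf fg.
Qed.

End measure_facts.

Lemma ae_distribution_eq dO (Om : measurableType dO) (R : realType)
    (mu : probability Om R) dT (T : measurableType dT) (X : {mfun Om >-> T})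
    (f g : T -> R) :
  measurable_fun setT f -> measurable_fun setT g ->
  (forall w, f (X w) = g (X w)) -> \forall x \ae distribution mu X, f x = g x.
Proof.
move=> mf mg fgX.
have neqE : [set x | f x != g x] = (fun x => f x - g x) @^-1` ~` [set 0].
  apply/seteqP; split => x /=; first by move=> /eqP fg /subr0_eq.
  by move=> fg; apply/eqP => e; apply: fg; rewrite e subrr.
exists [set x | f x != g x]; split; last by move=> x /= /eqP.
- rewrite neqE -[_ @^-1` _]setTI.
  by apply: measurable_funB => //; exact: measurableC.
- rewrite /distribution /= /pushforward.
  have -> : X @^-1` [set x | f x != g x] = set0.
    by apply/seteqP; split => w //=; rewrite fgX eqxx.
  exact: measure0.
Qed.

Section rn_density.
Context d (T : measurableType d) (R : realType).
Variables (nu : {finite_measure set T -> \bar R})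
  (mu : {sigma_finite_measure set T -> \bar R}).
Hypothesis numu : nu `<< mu.
Local Notation h := (rn_density nu mu).

Lemma rn_density_ge0 x : 0 <= h x.
Proof. by apply: fine_ge0; exact: Radon_Nikodym_SigmaFinite.f_ge0. Qed.

Lemma EFin_rn_density x : (h x)%:E = Radon_Nikodym_SigmaFinite.f nu mu x.
Proof. by rewrite fineK //; exact: Radon_Nikodym_SigmaFinite.f_fin_num. Qed.

Lemma measurable_rn_density : measurable_fun setT h.
Proof.
apply: measurableT_comp => //.
exact: measurable_int (Radon_Nikodym_SigmaFinite.f_integrable numu).
Qed.

Lemma measurable_rn_density_inv : measurable_fun setT (fun x => (h x)^-1).
Proof.
have -> : (fun x => (h x)^-1) = (fun x => powR (h x) (-1)).
  by apply/funext => x; rewrite powR_inv1 ?rn_density_ge0.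
apply: (@measurableT_comp _ _ _ _ _ _ (@powR R ^~ (-1))) => //.
exact: measurable_rn_density.
Qed.

Lemma measurable_rn_density_eq0 : measurable [set x | h x = 0].
Proof.
have := @measurable_rn_density measurableT [set 0] (measurable_set1 _).
by rewrite setTI.
Qed.

Lemma rn_density_eq0_null : nu [set x | h x = 0] = 0%E.
Proof.
rewrite (Radon_Nikodym_SigmaFinite.f_integral numu measurable_rn_density_eq0).
by apply: integral0_eq => x /= hx0; rewrite -EFin_rn_density hx0.
Qed.

Lemma mul_rn_densityK_ae (Z : T -> R) : \forall x \ae nu, Z x * h x / h x = Z x.
Proof.
exists [set x | h x = 0]; split.
- exact: measurable_rn_density_eq0.
- exact: rn_density_eq0_null.
- by move=> x /= ZK; apply: contra_notP ZK => /eqP h0; rewrite mulfK.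
Qed.

Local Open Scope ereal_scope.

Lemma integral_abs_rn_density (Z : T -> R) : measurable_fun setT Z ->
  \int[nu]_x `|Z x|%:E = \int[mu]_x (`|Z x| * h x)%:E.
Proof.
move=> mZ; rewrite -(Radon_Nikodym_SigmaFinite.change_of_variables numu
  (f := fun x => `|Z x|%:E)) //.
- by apply: eq_integral => x _; rewrite -EFin_rn_density EFinM.
- by apply/measurable_EFinP; exact: measurableT_comp.
Qed.

Lemma Lnorm1_mul_rn_density (Z : T -> R) : measurable_fun setT Z ->
  'N[mu]_1[EFin \o (fun x => Z x * h x)%R] = 'N[nu]_1[EFin \o Z].
Proof.
move=> mZ; rewrite !Lnorm1 /= integral_abs_rn_density //.
by apply: eq_integral => x _; rewrite normrM (ger0_norm (rn_density_ge0 x)).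
Qed.

Lemma Lnorm1_div_rn_density_le (Z : T -> R) : measurable_fun setT Z ->
  'N[nu]_1[EFin \o (fun x => Z x / h x)%R] <= 'N[mu]_1[EFin \o Z].
Proof.
move=> mZ; rewrite !Lnorm1 /=.
rewrite integral_abs_rn_density; last first.
  by apply: measurable_funM => //; exact: measurable_rn_density_inv.
apply: ge0_le_integral => //.
- by move=> x _; rewrite lee_fin mulr_ge0 ?rn_density_ge0.
- apply/measurable_EFinP; apply: measurable_funM; last exact: measurable_rn_density.
  apply: measurableT_comp => //; apply: measurable_funM => //.
  exact: measurable_rn_density_inv.
- by apply/measurable_EFinP; exact: measurableT_comp.
move=> x _; rewrite lee_fin normrM normfV (ger0_norm (rn_density_ge0 x)) -mulrA.
have [->|hx0] := eqVneq (h x) 0%R; first by rewrite invr0 mul0r mulr0.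
by rewrite mulVf // mulr1.
Qed.

Lemma inLp1_mul_rn_density (Z : T -> R) :
  inLp nu 1 Z -> inLp mu 1 (fun x => Z x * h x)%R.
Proof.
move=> [mZ Z1]; split.
  by apply: measurable_funM => //; exact: measurable_rn_density.
by rewrite Lnorm1_mul_rn_density.
Qed.

Lemma inLp1_div_rn_density (Z : T -> R) :
  inLp mu 1 Z -> inLp nu 1 (fun x => Z x / h x)%R.
Proof.
move=> [mZ Z1]; split.
  by apply: measurable_funM => //; exact: measurable_rn_density_inv.
by apply: le_lt_trans Z1; exact: Lnorm1_div_rn_density_le.
Qed.

Lemma cvg_Lnorm1_div_rn_density (Zn : nat -> T -> R) (Z : T -> R) :
  (forall n, measurable_fun setT (Zn n)) -> measurable_fun setT Z ->
  (fun n => 'N[mu]_1[EFin \o (fun x => Zn n x - Z x)%R]) @ \oo --> 0 ->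
  (fun n => 'N[nu]_1[EFin \o (fun x => Zn n x / h x - Z x / h x)%R]) @ \oo --> 0.
Proof.
move=> mZn mZ Zn_cvg; apply: (squeeze_cvge _ (cvg_cst 0) Zn_cvg).
apply: nearW => n; rewrite Lnorm_ge0 /=.
have -> : (EFin \o (fun x => Zn n x / h x - Z x / h x)%R) =
          (EFin \o (fun x => (Zn n x - Z x) / h x)%R).
  by apply/funext => x /=; rewrite mulrBl.
by apply: Lnorm1_div_rn_density_le; exact: measurable_funB.
Qed.

Lemma coherent_L1_risk_div_rn_density (rho : (T -> R) -> R) :
  coherent_L1_risk nu rho ->
  coherent_L1_risk mu (fun Z => rho (fun x => Z x / h x)%R).
Proof.
move=> [rho_ae rho_cvx rho_lsc rho_hom]; split.
- move=> Z1 Z2 Z11 Z21 Z12; apply: rho_ae; try exact: inLp1_div_rn_density.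
  by apply: (@dominates_ae _ _ _ nu mu _ numu); apply: filterS Z12 => x /= ->.
- move=> Z1 Z2 t Z11 Z21 t01.
  have -> : (fun x => (t * Z1 x + (1 - t) * Z2 x) / h x)%R =
            (fun x => t * (Z1 x / h x) + (1 - t) * (Z2 x / h x))%R.
    by apply/funext => x; rewrite mulrDl !mulrA.
  by apply: rho_cvx => //; exact: inLp1_div_rn_density.
- move=> Zn Z c Zn1 Z1 Znc Zn_cvg.
  apply: (rho_lsc (fun n x => Zn n x / h x)%R) => //.
  + by move=> n; exact: inLp1_div_rn_density.
  + exact: inLp1_div_rn_density.
  + by apply: cvg_Lnorm1_div_rn_density Zn_cvg => [n|]; [exact: (Zn1 n).1|exact: Z1.1].
- move=> Z t Z1 t0.
  have -> : (fun x => t * Z x / h x)%R = (fun x => t * (Z x / h x))%R.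
    by apply/funext => x; rewrite mulrA.
  by apply: rho_hom => //; exact: inLp1_div_rn_density.
Qed.

End rn_density.

Theorem theorem2 (R : realType) (d k m : nat)
  (dO : measure_display) (Om : measurableType dO) (mu : probability Om R)
  (mu_complete : measure_is_complete mu)
  (* random pairs (X_i, Y_i), i = 0..m *)
  (X : 'I_m.+1 -> {mfun Om >-> Rvec R d}) (Y : 'I_m.+1 -> {mfun Om >-> R})
  (p p' : \bar R) (hp : (1 <= p)%E) (hp' : (1 <= p')%E)
  (* conditional risk mappings rhat_i( . | X_i) : Z^i_2 -> Z^i_1 *)
  (rhat : 'I_m.+1 -> (Rvec R d * R -> R) -> Om -> R)
  (rhat_into_Z1 : forall i Z,
     inLp (distribution mu (pairRV (X i) (Y i))) p' Z ->
     (forall B : set R, measurable B ->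
        exists A : set (Rvec R d), measurable A /\ rhat i Z @^-1` B = X i @^-1` A)
     /\ ('N[mu]_p[EFin \o rhat i Z] < +oo)%E)
  (rhat_subst : forall i Z,
     inLp (distribution mu (pairRV (X i) (Y i))) p' Z ->
     forall w, rhat i Z w = rhat i (fun q => Z (X i w, q.2)) w)
  (* losses, hypothesis class, outer risk measures *)
  (ell : 'I_m.+1 -> Rvec R k -> R -> R) (ell_ge0 : forall i z y, 0 <= ell i z y)
  (Fset : set (Rvec R d -> Rvec R k))
  (Fset_meas : forall f, Fset f -> measurable_fun setT f)
  (rho : 'I_m.+1 -> (Rvec R d -> R) -> R)
  (rho_risk : forall i, coherent_L1_risk (distribution mu (X i)) (rho i))
  (rho_dual : forall i, L1_dual_rep (distribution mu (X i)) (rho i))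
  (* F_i(z, x) = value of rhat_i(ell_i(z, Y_i) | X_i) at X_i = x *)
  (F : 'I_m.+1 -> Rvec R k -> Rvec R d -> R)
  (F_def : forall i z w, rhat i (fun q => ell i z q.2) w = F i z (X i w))
  (F_Lp : forall i f, Fset f -> inLp (distribution mu (X i)) p (fun x => F i (f x) x))
  (* (A1) *)
  (A1_ac : forall i, i != ord0 ->
     distribution mu (X i) `<< distribution mu (X ord0))
  (A1_nonatomic : nonatomic (distribution mu (X ord0)))
  (* (A2) *)
  (A2_Lp : forall i f, Fset f ->
     inLp (distribution mu (pairRV (X i) (Y i))) p' (fun q => ell i (f q.1) q.2))
  (A2_dec : decomposable Fset) :
  (forall f, Fset f -> forall g : Rvec R d -> R, measurable_fun setT g ->
     (forall w, rhat ord0 (fun q => ell ord0 (f q.1) q.2) w = g (X ord0 w)) ->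
     rho ord0 g = rho ord0 (fun x => F ord0 (f x) x))
  /\
  (forall i : 'I_m.+1, i != ord0 ->
     exists (rt : (Rvec R d -> R) -> R) (G : Rvec R k -> Rvec R d -> R),
       [/\ coherent_L1_risk (distribution mu (X ord0)) rt,
           (forall f, Fset f -> inLp (distribution mu (X ord0)) 1 (fun x => G (f x) x)) &
           forall f, Fset f -> forall g : Rvec R d -> R, measurable_fun setT g ->
             (forall w, rhat i (fun q => ell i (f q.1) q.2) w = g (X i w)) ->
             rho i g = rt (fun x => G (f x) x)]).
Proof.
set mu0 := distribution mu (X ord0).
have F1 i f : Fset f -> inLp (distribution mu (X i)) 1 (fun x => F i (f x) x).
  by move=> Ff; apply: inLp1_of_inLp hp _; exact: F_Lp.
have rho_F i f : Fset f -> forall g : Rvec R d -> R, measurable_fun setT g ->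
    (forall w, rhat i (fun q => ell i (f q.1) q.2) w = g (X i w)) ->
    rho i g = rho i (fun x => F i (f x) x).
  move=> Ff g mg gX; apply: (coherent_L1_risk_ae_eq (rho_risk i) (F1 i f Ff) mg).
  apply: (ae_distribution_eq _ mg (F_Lp i f Ff).1) => w.
  by rewrite -gX (rhat_subst i _ (A2_Lp i f Ff)) /= F_def.
split; first exact: rho_F.
move=> i i0; set nu := distribution mu (X i).
have numu : nu `<< mu0 := A1_ac i i0.
exists (fun Z => rho i (fun x => Z x / rn_density nu mu0 x)),
       (fun z x => F i z x * rn_density nu mu0 x).
split.
- exact: coherent_L1_risk_div_rn_density (rho_risk i).
- by move=> f Ff; exact: inLp1_mul_rn_density (F1 i f Ff).
move=> f Ff g mg gX; rewrite (rho_F i f Ff g mg gX).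
have G1 := inLp1_mul_rn_density numu (F1 i f Ff).
apply: coherent_L1_risk_ae_eq (rho_risk i) (inLp1_div_rn_density numu G1) _ _.
  exact: (F1 i f Ff).1.
by apply: filterS (mul_rn_densityK_ae numu (fun x => F i (f x) x)) => x ->.
Qed.
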